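(* Let $\mathcal{X}$ be a finite nonempty set of types, let $n=(n_x)_{x\in\mathcal{X}}$ be nonnegative integers such that $n_x$ is even for every $x\in\mathcal{X}$, and let $\Phi=(\Phi_{xy})_{x,y\in\mathcal{X}}$ be a real matrix with $\Phi_{xy}=\Phi_{yx}$ for all $x,y$. Then $\mathcal{W}_{\mathcal{P}}(n,\Phi)=\mathcal{W}_{\mathcal{B}}(n,n,\Phi/2)$.
   Context: Roommate matching with transferable utility: $n_x$ is the number of individuals of type $x$; a pair of types $\{x,y\}$ (possibly $x=y$) generates joint surplus $\Phi_{xy}$; singles get utility $0$. Feasible roommate matchings: $\mathcal{P}(n)=\{\mu=(\mu_{xy})_{x,y\in\mathcal{X}}:\ \mu_{xy}\in\mathbb{N},\ \mu_{xy}=\mu_{yx},\ 2\mu_{xx}+\sum_{y\neq x}\mu_{xy}\le n_x\ \forall x\}$. Total surplus $S_R(\mu;\Phi)=\sum_x\mu_{xx}\Phi_{xx}+\sum_{x\neq y}\mu_{xy}\Phi_{xy}/2$, and $\mathcal{W}_{\mathcal{P}}(n,\Phi)=\max_{\mu\in\mathcal{P}(n)}S_R(\mu;\Phi)$. Bipartite problem: $\mathcal{B}(n,n)=\{\nu\in\mathbb{N}^{\mathcal{X}\times\mathcal{X}}:\ \sum_y\nu_{xy}\le n_x\ \forall x,\ \sum_x\nu_{xy}\le n_y\ \forall y\}$ and $\mathcal{W}_{\mathcal{B}}(n,n,\Phi/2)=\max_{\nu\in\mathcal{B}(n,n)}\sum_{x,y}\nu_{xy}\Phi_{xy}/2$.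 *)

From HB Require Import structures.
From mathcomp Require Import all_boot all_order all_algebra.
Set Implicit Arguments. Unset Strict Implicit. Unset Printing Implicit Defensive.
Import Order.TTheory GRing.Theory Num.Theory.
Local Open Scope ring_scope.

Section Roommate.
Variables (R : realFieldType) (X : finType).

Definition roommate_feasible (n : X -> nat) (mu : X -> X -> nat) : Prop :=
  (forall x y, mu x y = mu y x) /\
  (forall x, (2 * mu x x + \sum_(y | y != x) mu x y <= n x)%N).

Definition roommate_surplus (Phi : X -> X -> R) (mu : X -> X -> nat) : R :=
  \sum_x (mu x x)%:R * Phi x x
  + \sum_x \sum_(y | y != x) (mu x y)%:R * Phi x y / 2.

Definition bipartite_feasible (n : X -> nat) (nu : X -> X -> nat) : Prop :=
  (forall x, (\sum_y nu x y <= n x)%N) /\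
  (forall y, (\sum_x nu x y <= n y)%N).

Definition bipartite_surplus (Psi : X -> X -> R) (nu : X -> X -> nat) : R :=
  \sum_x \sum_y (nu x y)%:R * Psi x y.

Definition is_WP (n : X -> nat) (Phi : X -> X -> R) (v : R) : Prop :=
  (exists mu, roommate_feasible n mu /\ roommate_surplus Phi mu = v) /\
  (forall mu, roommate_feasible n mu -> roommate_surplus Phi mu <= v).

Definition is_WB (n : X -> nat) (Psi : X -> X -> R) (v : R) : Prop :=
  (exists nu, bipartite_feasible n nu /\ bipartite_surplus Psi nu = v) /\
  (forall nu, bipartite_feasible n nu -> bipartite_surplus Psi nu <= v).

End Roommate.

(* A bipartite matching nu of the types with themselves is a bipartite multigraph
   on two copies of the types. Every multigraph has a balanced orientation (in- and
   out-degrees differ by at most one at each vertex): if some vertex has two arcs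
   leaving it, replace them by a single arc between their heads and reroute that
   arc through the vertex in a balanced orientation of the smaller graph.
   Orienting the bipartite graph splits nu = A + B, and since every n_x is even,
   balance gives outdeg + indeg <= n_x for A and for B separately. Symmetrizing
   A or B therefore yields a roommate matching whose surplus is its full
   bipartite surplus, and the better of the two is at least the surplus of nu
   under Phi/2. Conversely, doubling the diagonal of a roommate matching gives a
   bipartite matching with the same surplus. *)

From HB Require Import structures.
From mathcomp Require Import all_boot all_order all_algebra.
From mathcomp Require Import zify ring lra.
From Stdlib Require Import FunctionalExtensionality.
Set Implicit Arguments. Unset Strict Implicit. Unset Printing Implicit Defensive.
Import Order.TTheory GRing.Theory Num.Theory.

Section BalancedOrientation.
Variable V : finType.
Implicit Types (f g : V -> V -> nat) (a b u v w x y : V).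

Definition outdeg g x := \sum_y g x y.
Definition indeg g x := \sum_y g y x.
Definition nedges g := \sum_x outdeg g x.

Definition arc a b x y : nat := (x == a) && (y == b).
Definition add_arc g a b x y := g x y + arc a b x y.

Definition orients f g := forall x y, f x y + f y x = g x y + g y x.
Definition balanced f :=
  forall x, outdeg f x <= (indeg f x).+1 /\ indeg f x <= (outdeg f x).+1.
Definition balanceable g := exists2 f, orients f g & balanced f.

Lemma arcC a b x y : arc a b x y = arc b a y x.
Proof. by rewrite /arc andbC. Qed.

Lemma outdeg_add_arc g a b x : outdeg (add_arc g a b) x = outdeg g x + (x == a).
Proof.
rewrite /outdeg big_split /= /arc; congr (_ + _).
case: (x == a) => /=; last by rewrite big1.
by rewrite (bigD1 b) //= eqxx big1 // => y /negbTE ->.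
Qed.

Lemma indeg_add_arc g a b x : indeg (add_arc g a b) x = indeg g x + (x == b).
Proof.
rewrite /indeg big_split /= /arc; congr (_ + _).
case: (x == b) => /=; last by rewrite big1 // => y _; rewrite andbF.
by rewrite (bigD1 a) //= eqxx big1 // => y /negbTE ->.
Qed.

Lemma nedges_add_arc g a b : nedges (add_arc g a b) = (nedges g).+1.
Proof.
rewrite /nedges (eq_bigr _ (fun x _ => outdeg_add_arc g a b x)) big_split /=.
rewrite [X in _ + X](bigD1 a) //= eqxx [X in _ + (_ + X)]big1 ?addn1 //.
by move=> x /negbTE ->.
Qed.

Lemma add_arc_of_pos g a b : 0 < g a b -> exists g1, g = add_arc g1 a b.
Proof.
move=> gab; exists (fun x y => g x y - arc a b x y).
apply: functional_extensionality => x; apply: functional_extensionality => y.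
rewrite /add_arc subnK // /arc.
by case: eqP => [->|//]; case: eqP => [->|].
Qed.

Lemma pos_outdeg g x : 0 < outdeg g x -> exists y, 0 < g x y.
Proof.
by rewrite lt0n sum_nat_eq0 => /forallPn [y gxy]; exists y; rewrite lt0n.
Qed.

Lemma balanceable_sym g g' :
  (forall x y, g x y + g y x = g' x y + g' y x) -> balanceable g -> balanceable g'.
Proof. by move=> gg' [f fg fb]; exists f => // x y; rewrite fg gg'. Qed.

Lemma balanced_reroute f a b v :
  balanced (add_arc f a b) -> balanced (add_arc (add_arc f a v) v b).
Proof. by move=> fb x; have := fb x; rewrite !outdeg_add_arc !indeg_add_arc; lia. Qed.

Lemma balanceable_split_off g u v w :
  balanceable (add_arc g u w) -> balanceable (add_arc (add_arc g u v) v w).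
Proof.
move=> [f].
wlog fuw : u w f / 0 < f u w => [hwlog fo fb|].
  have [fuw0|fuw] := posnP (f u w); last exact: hwlog fo fb.
  have fwu : 0 < f w u by have := fo u w; rewrite /add_arc /arc !eqxx /=; lia.
  have fo' : orients f (add_arc g w u).
    by move=> x y; have := fo x y; rewrite /add_arc !(arcC w u); lia.
  apply: balanceable_sym (hwlog w u f fwu fo' fb) => x y.
  by rewrite /add_arc !(arcC v); lia.
have [f1 ->] := add_arc_of_pos fuw => fo fb.
exists (add_arc (add_arc f1 u v) v w); last exact: balanced_reroute.
by move=> x y; have := fo x y; rewrite /add_arc; lia.
Qed.

Lemma balanceable_shortcut g v :
  1 < outdeg g v -> (forall g', nedges g' < nedges g -> balanceable g') ->
  balanceable g.
Proof.
move=> gv IH.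
have [u /add_arc_of_pos [g1 def_g]] := pos_outdeg (ltnW gv).
have [w /add_arc_of_pos [g2 def_g1]] : exists w, 0 < g1 v w.
  by apply: pos_outdeg; move: gv; rewrite def_g outdeg_add_arc eqxx; lia.
rewrite {}def_g {}def_g1 in IH *.
apply: (@balanceable_sym (add_arc (add_arc g2 u v) v w)).
  by move=> x y; rewrite /add_arc !(arcC v); lia.
by apply/balanceable_split_off/IH; rewrite !nedges_add_arc.
Qed.

Definition transpose g x y := g y x.

Lemma nedges_transpose g : nedges (transpose g) = nedges g.
Proof. exact: exchange_big. Qed.

Lemma balanceable_transpose g : balanceable (transpose g) -> balanceable g.
Proof. by apply: balanceable_sym => x y; rewrite /transpose addnC. Qed.

Theorem balanced_orientation g : balanceable g.
Proof.
elim: {g}(nedges g).+1 {-2}g (ltnSn (nedges g)) => // N IHN g gN.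
have IH g' : nedges g' < nedges g -> balanceable g'.
  by move=> g'g; apply: IHN; lia.
have [/existsP [v gv]|/existsPn outg] := boolP [exists v, 1 < outdeg g v].
  exact: balanceable_shortcut gv IH.
have [/existsP [v gv]|/existsPn ing] := boolP [exists v, 1 < indeg g v].
  apply/balanceable_transpose/(balanceable_shortcut gv) => g'.
  by rewrite nedges_transpose; apply: IH.
exists g => // x; have := outg x; have := ing x; lia.
Qed.

End BalancedOrientation.

Local Open Scope ring_scope.

Section Roommate.
Variables (R : realFieldType) (X : finType).
Implicit Types (Phi Psi : X -> X -> R) (mu nu A B C : X -> X -> nat) (n : X -> nat).

Lemma bipartite_surplusD Psi A B :
  bipartite_surplus Psi (fun x y => A x y + B x y)%N =
  bipartite_surplus Psi A + bipartite_surplus Psi B.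
Proof.
rewrite /bipartite_surplus -big_split; apply: eq_bigr => x _.
by rewrite -big_split; apply: eq_bigr => y _; rewrite natrD mulrDl.
Qed.

Lemma bipartite_surplus_transpose Psi C : (forall x y, Psi x y = Psi y x) ->
  bipartite_surplus Psi (transpose C) = bipartite_surplus Psi C.
Proof.
move=> Psi_sym; rewrite /bipartite_surplus exchange_big.
by apply: eq_bigr => x _; apply: eq_bigr => y _; rewrite Psi_sym.
Qed.

Lemma bipartite_surplus_half Phi C :
  bipartite_surplus (fun x y => Phi x y / 2) C = bipartite_surplus Phi C / 2.
Proof.
rewrite /bipartite_surplus mulr_suml; apply: eq_bigr => x _.
by rewrite mulr_suml; apply: eq_bigr => y _; rewrite mulrA.
Qed.

(* Each roommate pair of types {x, y} is seen as the two couples (x, y) and (y, x). *)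
Definition double_diag mu x y : nat := if x == y then (mu x x).*2 else mu x y.

Lemma double_diag_feasible n mu :
  roommate_feasible n mu -> bipartite_feasible n (double_diag mu).
Proof.
move=> [mu_sym mu_le]; split=> x; rewrite (bigD1 x) //= /double_diag eqxx -mul2n.
  by under eq_bigr => y yx do rewrite eq_sym (negbTE yx).
by under eq_bigr => y yx do rewrite (negbTE yx) mu_sym.
Qed.

Lemma bipartite_surplus_double_diag Phi mu :
  bipartite_surplus (fun x y => Phi x y / 2) (double_diag mu) =
  roommate_surplus Phi mu.
Proof.
rewrite /bipartite_surplus /roommate_surplus -big_split; apply: eq_bigr => x _.
rewrite (bigD1 x) //= /double_diag eqxx -mul2n natrM; congr (_ + _); first by field.
by apply: eq_bigr => y yx; rewrite eq_sym (negbTE yx) mulrA.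
Qed.

Definition symmetrize C x y : nat := if x == y then C x x else (C x y + C y x)%N.

Definition degree_bounded n C := forall x, (outdeg C x + indeg C x <= n x)%N.

Lemma symmetrize_feasible n C :
  degree_bounded n C -> roommate_feasible n (symmetrize C).
Proof.
move=> C_le; split=> [x y|x].
  by rewrite /symmetrize eq_sym; case: eqP => [->|_]; lia.
rewrite /symmetrize eqxx.
under eq_bigr => y yx do rewrite eq_sym (negbTE yx).
have := C_le x; rewrite /outdeg /indeg (bigD1 x) //= [X in (_ + X)%N](bigD1 x) //=.
rewrite big_split /=; lia.
Qed.

Lemma double_diag_symmetrize C :
  double_diag (symmetrize C) = (fun x y => C x y + transpose C x y)%N.
Proof.
apply: functional_extensionality => x; apply: functional_extensionality => y.
by rewrite /double_diag /symmetrize /transpose; case: eqP => [->|]; rewrite ?eqxx ?addnn.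
Qed.

Lemma roommate_surplus_symmetrize Phi C : (forall x y, Phi x y = Phi y x) ->
  roommate_surplus Phi (symmetrize C) = bipartite_surplus Phi C.
Proof.
move=> Phi_sym; rewrite -bipartite_surplus_double_diag double_diag_symmetrize.
rewrite bipartite_surplusD bipartite_surplus_transpose => [|x y]; last by rewrite Phi_sym.
by rewrite bipartite_surplus_half; field.
Qed.

Definition bipartite_graph nu (p q : X + X) : nat :=
  if (p, q) is (inl x, inr y) then nu x y else 0%N.

Lemma half_le_even (m a b : nat) :
  ~~ odd m -> (a + b <= m)%N -> (a <= b.+1)%N -> (a.*2 <= m)%N.
Proof. by move=> m_even; have := odd_double_half m; rewrite (negbTE m_even); lia. Qed.

Lemma bipartite_split n nu : (forall x, ~~ odd (n x)) -> bipartite_feasible n nu ->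
  exists A B, [/\ nu = (fun x y => A x y + B x y)%N,
                  degree_bounded n A & degree_bounded n B].
Proof.
move=> n_even [nu_rows nu_cols].
have [f fo fb] := balanced_orientation (bipartite_graph nu).
pose A x y := f (inl x) (inr y); pose B x y := f (inr y) (inl x).
have f_ll x y : f (inl x) (inl y) = 0%N.
  by have := fo (inl x) (inl y); rewrite /bipartite_graph; lia.
have f_rr x y : f (inr x) (inr y) = 0%N.
  by have := fo (inr x) (inr y); rewrite /bipartite_graph; lia.
have nuE : nu = (fun x y => A x y + B x y)%N.
  apply: functional_extensionality => x; apply: functional_extensionality => y.
  by have := fo (inl x) (inr y); rewrite /bipartite_graph /A /B; lia.
have f_outl x : outdeg f (inl x) = outdeg A x by rewrite /outdeg big_sumType big1.
have f_inl x : indeg f (inl x) = outdeg B x by rewrite /indeg big_sumType big1.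
have f_outr y : outdeg f (inr y) = indeg B y.
  by rewrite /outdeg big_sumType /= addnC big1.
have f_inr y : indeg f (inr y) = indeg A y.
  by rewrite /indeg big_sumType /= addnC big1.
have out_le x : (outdeg A x + outdeg B x <= n x)%N.
  by have := nu_rows x; rewrite nuE big_split.
have in_le x : (indeg A x + indeg B x <= n x)%N.
  by have := nu_cols x; rewrite nuE big_split.
have deg_half x : [/\ (outdeg A x).*2 <= n x, (indeg A x).*2 <= n x,
                      (outdeg B x).*2 <= n x & (indeg B x).*2 <= n x]%N.
  have := fb (inl x); have := fb (inr x).
  rewrite f_outl f_inl f_outr f_inr => -[inB inA] [outA outB]; split.
  - exact: half_le_even (n_even x) (out_le x) outA.
  - exact: half_le_even (n_even x) (in_le x) inA.
  - by apply: half_le_even (n_even x) _ outB; rewrite addnC.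
  - by apply: half_le_even (n_even x) _ inB; rewrite addnC.
by exists A, B; split=> // x; have [] := deg_half x; lia.
Qed.

Lemma roommate_of_bipartite n Phi nu :
  (forall x, ~~ odd (n x)) -> (forall x y, Phi x y = Phi y x) ->
  bipartite_feasible n nu ->
  exists2 mu, roommate_feasible n mu &
    bipartite_surplus (fun x y => Phi x y / 2) nu <= roommate_surplus Phi mu.
Proof.
move=> n_even Phi_sym /(bipartite_split n_even) [A [B [-> bA bB]]].
rewrite bipartite_surplusD !bipartite_surplus_half.
wlog le_BA : A B bA bB / bipartite_surplus Phi B <= bipartite_surplus Phi A.
  move=> hwlog; have [|/ltW] := leP (bipartite_surplus Phi B) (bipartite_surplus Phi A).
    exact: hwlog.
  by rewrite addrC; apply: hwlog.
exists (symmetrize A); first exact: symmetrize_feasible.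
by rewrite roommate_surplus_symmetrize //; lra.
Qed.

Definition roommate_feasibleb n mu : bool :=
  [forall x, forall y, mu x y == mu y x] &&
  [forall x, 2 * mu x x + \sum_(y | y != x) mu x y <= n x]%N.

Lemma roommate_feasibleP n mu :
  reflect (roommate_feasible n mu) (roommate_feasibleb n mu).
Proof.
apply: (iffP andP) => [[/forallP mu_sym /forallP mu_le]|[mu_sym mu_le]].
  by split=> // x y; apply/eqP; have /forallP := mu_sym x; apply.
by split; apply/forallP => x; [apply/forallP => y; rewrite mu_sym|apply: mu_le].
Qed.

Lemma roommate_feasible_le n mu x y : roommate_feasible n mu -> (mu x y <= n x)%N.
Proof.
move=> [_ /(_ x)]; have [->|yx] := eqVneq y x; first by lia.
by rewrite (bigD1 y) //=; lia.
Qed.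

Lemma bounded_argmax (I J : finType) (P : pred (I -> J -> nat))
    (F : (I -> J -> nat) -> R) (N : nat) (m0 : I -> J -> nat) :
  P m0 -> (forall m, P m -> forall i j, (m i j <= N)%N) ->
  exists2 m, P m & forall m', P m' -> F m' <= F m.
Proof.
move=> Pm0 m_le.
pose toM (g : {ffun I * J -> 'I_N.+1}) i j : nat := g (i, j).
pose ofM m : {ffun I * J -> 'I_N.+1} := [ffun p => inord (m p.1 p.2)].
have ofMK m : P m -> toM (ofM m) = m.
  move=> Pm; apply: functional_extensionality => i; apply: functional_extensionality => j.
  by rewrite /toM ffunE inordK // ltnS m_le.
have P_ofM0 : P (toM (ofM m0)) by rewrite ofMK.
have [g Pg g_max] :=
  @arg_maxP _ _ _ (ofM m0) (fun g => P (toM g)) (fun g => F (toM g)) P_ofM0.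
by exists (toM g) => // m Pm; rewrite -(ofMK m Pm); apply: g_max; rewrite ofMK.
Qed.

Lemma roommate_optimum n Phi :
  exists2 mu, roommate_feasible n mu &
    forall mu', roommate_feasible n mu' ->
      roommate_surplus Phi mu' <= roommate_surplus Phi mu.
Proof.
have zero_feasible : roommate_feasibleb n (fun _ _ => 0%N).
  by apply/roommate_feasibleP; split=> // x; rewrite big1.
have [|mu /roommate_feasibleP mu_f mu_max] :=
  bounded_argmax (roommate_surplus Phi) (N := \max_x n x) zero_feasible.
  move=> mu /roommate_feasibleP mu_f x y.
  exact: leq_trans (roommate_feasible_le x y mu_f) (leq_bigmax x).
by exists mu => // mu' /roommate_feasibleP; apply: mu_max.
Qed.

End Roommate.

Theorem proposition1 (R : realFieldType) (X : finType) (x0 : X)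
    (n : X -> nat) (Phi : X -> X -> R)
    (hn : forall x, ~~ odd (n x))
    (hPhi : forall x y, Phi x y = Phi y x) :
  exists v : R, is_WP n Phi v /\ is_WB n (fun x y => Phi x y / 2) v.
Proof.
have [mu mu_f mu_max] := roommate_optimum n Phi.
exists (roommate_surplus Phi mu); split; split.
- by exists mu.
- exact: mu_max.
- exists (double_diag mu); split; first exact: double_diag_feasible.
  exact: bipartite_surplus_double_diag.
- move=> nu /(roommate_of_bipartite hn hPhi) [mu' mu'_f le_nu].
  exact: le_trans le_nu (mu_max _ mu'_f).
Qed.
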